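(* Let $a>0$ and let $f$ be a $2a$-periodic function on $\mathbb{R}$ that is $C^\infty$ everywhere except at the points $2a\mathbb{Z}$, and suppose there is $\delta>0$ and a function $\varphi$ analytic on $(-\delta,\delta)$ such that $f(x)=\varphi(x)/x^2$ for $0<|x|<\delta$. Let $I[f]:=\int_{-a}^{a}f(x)\,\mathrm{d}x$, understood as a Hadamard finite-part integral. For $n\in\mathbb{Z}^+$ let $h=a/n$ and $T_n[f]:=h\sum_{i=-n,\ i\neq 0}^{n-1}f(ih)$. Then for every $\mu>0$, $$I[f]=T_n[f]-\frac{\pi^2}{3h}\varphi(0)+\frac{\varphi''(0)\,h}{2}+O(h^\mu)\qquad (h\to 0).$$
   Context: The Hadamard finite-part integral of $\varphi(x)/x^2$ over an interval containing $0$ is the finite part of $\int_{|x|>\epsilon}$ as $\epsilon\to0^+$, i.e. the limit after discarding the term divergent like $2\varphi(0)/\epsilon$. *)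

From Stdlib Require Import Reals.
From Coquelicot Require Import Coquelicot.
Open Scope R_scope.

Definition analytic_on (phi : R -> R) (delta : R) : Prop :=
  forall x0, Rabs x0 < delta ->
    exists r, 0 < r /\ exists c : nat -> R,
      forall x, Rabs (x - x0) < r -> is_pseries c (x - x0) (phi x).

Definition smooth_off_2aZ (f : R -> R) (a : R) : Prop :=
  forall x, (forall k : Z, x <> 2 * a * IZR k) -> forall m : nat, ex_derive_n f m x.

Definition is_hadamard_fp (f : R -> R) (a phi0 I : R) : Prop :=
  filterlim (fun eps => RInt f (- a) (- eps) + RInt f eps a - 2 * phi0 / eps)
    (at_right 0) (locally I).

Definition trap_sum (f : R -> R) (a : R) (n : nat) : R :=
  let h := a / INR n in
  h * (sum_n_m (fun k => f (- (INR k * h))) 1 n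
       + sum_n_m (fun k => f (INR k * h)) 1 (n - 1)).

From Stdlib Require Import Reals Lra Lia FunctionalExtensionality ZArith.
From Coquelicot Require Import Coquelicot.
Open Scope R_scope.

(* With c := PI / (2 a), the functions c^2 / sin^2 (c x) and c cot (c x) are
   2a-periodic with double resp. simple poles exactly at 2aZ, so subtracting
   phi(0) times the first and phi'(0) times the second from f leaves a remainder r
   that extends to a smooth 2a-periodic function, with r(0) = phi''(0)/2 - phi(0) c^2/3.
   For a smooth periodic function the trapezoidal rule over a period is accurate to
   every order: iterated integration by parts against the periodic Bernoulli
   functions produces no boundary terms.  The singular part is treated exactly:
   on the grid the cotangent terms cancel by oddness, and the classical sum
   sum_{k=1}^{n-1} csc^2 (k pi / 2n) = (2n^2 - 2)/3 yields the term pi^2 phi(0)/(3h);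
   its finite-part integral is explicit, since c cot (c e) - 1/e -> 0 and the two
   logarithms coming from the cotangent cancel. *)

(* [smooth_upto k U f]: the derivatives of [f] of order [<= k] are differentiable
   on [U], i.e. [f] is [k+1] times differentiable there. *)
Definition smooth_upto (k : nat) (U : R -> Prop) (f : R -> R) :=
  forall m x, (m <= k)%nat -> U x -> ex_derive (Derive_n f m) x.

Lemma Derive_n_Derive (f : R -> R) m x : Derive_n (Derive f) m x = Derive_n f (S m) x.
Proof.
  revert x; induction m; intro x; simpl; [reflexivity|].
  apply Derive_ext; intro; apply IHm.
Qed.

Lemma smooth_upto_ex_derive k U f x : smooth_upto k U f -> U x -> ex_derive f x.
Proof. intros H Hx. apply (H 0%nat x); auto; lia. Qed.

Lemma smooth_upto_pred U k f : smooth_upto (S k) U f -> smooth_upto k U f.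
Proof. intros H m x Hm Hx; apply H; auto. Qed.

Lemma smooth_upto_0 U f : (forall x, U x -> ex_derive f x) -> smooth_upto 0 U f.
Proof. intros H m x Hm Hx. replace m with 0%nat by lia. apply H; auto. Qed.

Lemma smooth_upto_S U k f :
  smooth_upto 0 U f -> smooth_upto k U (Derive f) -> smooth_upto (S k) U f.
Proof.
  intros H0 H m x Hm Hx. destruct m; [now apply (H0 0%nat)|].
  apply ex_derive_ext with (f := Derive_n (Derive f) m).
  - intro; apply Derive_n_Derive.
  - apply H; auto; lia.
Qed.

Lemma smooth_upto_Derive U k f : smooth_upto (S k) U f -> smooth_upto k U (Derive f).
Proof.
  intros H m x Hm Hx.
  apply ex_derive_ext with (f := Derive_n f (S m)).
  - intro; symmetry; apply Derive_n_Derive.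
  - apply H; auto; lia.
Qed.

Lemma smooth_upto_sub U (V : R -> Prop) k f :
  (forall x, U x -> V x) -> smooth_upto k V f -> smooth_upto k U f.
Proof. intros HUV H m x Hm Hx. apply H; auto. Qed.

Lemma smooth_upto_scal U k c f : smooth_upto k U f -> smooth_upto k U (fun x => c * f x).
Proof.
  intros Hf m x Hm Hx.
  apply ex_derive_ext with (f := fun y => c * Derive_n f m y).
  - intro; symmetry; apply Derive_n_scal_l.
  - apply ex_derive_scal; auto.
Qed.

Lemma smooth_upto_const U k c : smooth_upto k U (fun _ => c).
Proof.
  intros m x Hm Hx. destruct m; [apply ex_derive_const|].
  apply ex_derive_ext with (f := fun _ => 0).
  - intro t; symmetry; apply Derive_n_const.
  - apply ex_derive_const.
Qed.

Lemma smooth_upto_id U k : smooth_upto k U (fun x => x).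
Proof.
  destruct k; apply smooth_upto_0 || apply smooth_upto_S; try (intros; apply ex_derive_id).
  apply smooth_upto_0; intros; apply ex_derive_id.
  replace (Derive (fun x => x)) with (fun _ : R => 1); [apply smooth_upto_const|].
  apply functional_extensionality; intro; symmetry; apply Derive_id.
Qed.

Section OpenSet.
Variable U : R -> Prop.
Hypothesis U_open : open U.

Lemma smooth_upto_locally_ex_derive_n k f x : smooth_upto k U f -> U x ->
  locally x (fun y => forall j, (j <= S k)%nat -> ex_derive_n f j y).
Proof.
  intros H Hx. apply (locally_open U); auto.
  intros y Hy [|j] Hj; simpl; auto. apply H; auto; lia.
Qed.

Lemma smooth_upto_ext k f g :
  (forall x, U x -> f x = g x) -> smooth_upto k U f -> smooth_upto k U g.
Proof.
  intros He H m x Hm Hx.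
  apply ex_derive_ext_loc with (f := Derive_n f m); [|apply H; auto].
  apply (locally_open U); auto. intros y Hy.
  apply Derive_n_ext_loc. apply (locally_open U); auto.
Qed.

Lemma smooth_upto_plus k f g :
  smooth_upto k U f -> smooth_upto k U g -> smooth_upto k U (fun x => f x + g x).
Proof.
  intros Hf Hg m x Hm Hx.
  apply ex_derive_ext_loc with (f := fun y => Derive_n f m y + Derive_n g m y).
  - apply (locally_open U); auto. intros y Hy. symmetry. apply Derive_n_plus.
    + eapply filter_imp; [|apply (smooth_upto_locally_ex_derive_n k f y Hf Hy)].
      intros z Hz j Hj; apply Hz; lia.
    + eapply filter_imp; [|apply (smooth_upto_locally_ex_derive_n k g y Hg Hy)].
      intros z Hz j Hj; apply Hz; lia.
  - apply (ex_derive_plus (fun y => Derive_n f m y) (fun y => Derive_n g m y)); auto.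
Qed.

Lemma smooth_upto_mult k f g :
  smooth_upto k U f -> smooth_upto k U g -> smooth_upto k U (fun x => f x * g x).
Proof.
  revert f g; induction k; intros f g Hf Hg.
  - apply smooth_upto_0; intros x Hx.
    apply ex_derive_mult; eapply smooth_upto_ex_derive; eauto.
  - apply smooth_upto_S.
    + apply smooth_upto_0; intros x Hx.
      apply ex_derive_mult; eapply smooth_upto_ex_derive; eauto.
    + apply smooth_upto_ext with (f := fun x => Derive f x * g x + f x * Derive g x).
      * intros x Hx. symmetry; apply Derive_mult; eapply smooth_upto_ex_derive; eauto.
      * apply smooth_upto_plus; apply IHk; auto using smooth_upto_Derive, smooth_upto_pred.
Qed.

Lemma smooth_upto_inv k f : (forall x, U x -> f x <> 0) ->
  smooth_upto k U f -> smooth_upto k U (fun x => / f x).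
Proof.
  intros Hnz. revert f Hnz; induction k; intros f Hnz Hf.
  - apply smooth_upto_0; intros x Hx.
    apply ex_derive_inv; auto; eapply smooth_upto_ex_derive; eauto.
  - apply smooth_upto_S.
    + apply smooth_upto_0; intros x Hx.
      apply ex_derive_inv; auto; eapply smooth_upto_ex_derive; eauto.
    + apply smooth_upto_ext with (f := fun x => (-1) * (Derive f x * (/ f x * / f x))).
      * intros x Hx. rewrite Derive_inv; auto; [field; auto|].
        eapply smooth_upto_ex_derive; eauto.
      * apply smooth_upto_scal, smooth_upto_mult; [apply smooth_upto_Derive; auto|].
        apply smooth_upto_mult; apply IHk; auto; apply smooth_upto_pred; auto.
Qed.

End OpenSet.

Lemma smooth_upto_comp (U V : R -> Prop) k G u : open U -> open V -> (forall x, U x -> V (u x)) ->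
  smooth_upto k V G -> smooth_upto k U u -> smooth_upto k U (fun x => G (u x)).
Proof.
  intros HU HV Hm. revert G; induction k; intros G HG Hu.
  - apply smooth_upto_0; intros x Hx.
    apply ex_derive_comp; eapply smooth_upto_ex_derive; eauto.
  - apply smooth_upto_S.
    + apply smooth_upto_0; intros x Hx.
      apply ex_derive_comp; eapply smooth_upto_ex_derive; eauto.
    + apply (smooth_upto_ext U HU) with (f := fun x => Derive u x * Derive G (u x)).
      * intros x Hx. symmetry; apply Derive_comp; eapply smooth_upto_ex_derive; eauto.
      * apply (smooth_upto_mult U HU); [apply smooth_upto_Derive; auto|].
        apply IHk; auto using smooth_upto_Derive, smooth_upto_pred.
Qed.

Lemma smooth_upto_PSeries (a : nat -> R) r k :
  (forall x, Rabs x < r -> Rbar_lt (Rabs x) (CV_radius a)) ->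
  smooth_upto k (fun x => Rabs x < r) (PSeries a).
Proof. intros H m x Hm Hx. apply (ex_derive_n_PSeries (S m)). auto. Qed.

Lemma smooth_upto_PSeries_entire (a : nat -> R) U k :
  CV_radius a = p_infty -> smooth_upto k U (PSeries a).
Proof. intros H m x Hm Hx. apply (ex_derive_n_PSeries (S m)). rewrite H; simpl; auto. Qed.

(* Coquelicot's lemmas leave some equations at a canonical structure whose carrier
   is [R]; [ring] and [field] only recognise them once retyped at [R]. *)
Ltac as_real_eq := match goal with |- @eq _ ?a ?b => change (@eq R a b) end.

Lemma ball_Rabs (x y e : R) : ball x e y <-> Rabs (y - x) < e.
Proof. reflexivity. Qed.

Lemma ex_derive_continuousR (f : R -> R) x : ex_derive f x -> continuous f x.
Proof. apply (@ex_derive_continuous R_AbsRing R_NormedModule). Qed.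

Lemma ex_derive_plusR (f g : R -> R) x :
  ex_derive f x -> ex_derive g x -> ex_derive (fun y => f y + g y) x.
Proof. apply (@ex_derive_plus R_AbsRing R_NormedModule). Qed.

Lemma ex_derive_minusR (f g : R -> R) x :
  ex_derive f x -> ex_derive g x -> ex_derive (fun y => f y - g y) x.
Proof. apply (@ex_derive_minus R_AbsRing R_NormedModule). Qed.

Lemma RInt_derive (f df : R -> R) a b :
  (forall x, Rmin a b <= x <= Rmax a b -> is_derive f x (df x)) ->
  (forall x, Rmin a b <= x <= Rmax a b -> continuous df x) ->
  RInt df a b = f b - f a.
Proof.
  intros H1 H2. apply (@is_RInt_unique R_CompleteNormedModule).
  apply (@is_RInt_derive R_CompleteNormedModule f df a b); auto.
Qed.

Lemma RInt_plusR (f g : R -> R) a b : ex_RInt f a b -> ex_RInt g a b ->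
  RInt (fun x => f x + g x) a b = RInt f a b + RInt g a b.
Proof. intros. apply (@RInt_plus R_CompleteNormedModule); auto. Qed.

Lemma RInt_scalR (f : R -> R) a b c : ex_RInt f a b ->
  RInt (fun x => c * f x) a b = c * RInt f a b.
Proof. intros. apply (@RInt_scal R_CompleteNormedModule); auto. Qed.

Lemma ex_RInt_continuousR (f : R -> R) a b : (forall x, continuous f x) -> ex_RInt f a b.
Proof. intros H. apply (@ex_RInt_continuous R_CompleteNormedModule). intros; apply H. Qed.

Lemma ex_RInt_ex_derive (f : R -> R) a b : (forall x, ex_derive f x) -> ex_RInt f a b.
Proof. intros H. apply ex_RInt_continuousR. intro; apply ex_derive_continuousR; auto. Qed.

Lemma ex_RInt_ex_derive_le (g : R -> R) u v :
  u <= v -> (forall x, u <= x <= v -> ex_derive g x) -> ex_RInt g u v.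
Proof.
  intros Huv H. apply (@ex_RInt_continuous R_CompleteNormedModule). intros z Hz.
  rewrite Rmin_left, Rmax_right in Hz by lra. apply ex_derive_continuousR; auto.
Qed.

Lemma is_derive_RInt_from_0 (f : R -> R) t : (forall x, continuous f x) ->
  is_derive (fun t => RInt f 0 t) t (f t).
Proof.
  intros H. apply is_derive_RInt with (a := 0); [|apply H].
  apply filter_forall. intro b. apply RInt_correct. apply ex_RInt_continuousR; auto.
Qed.

Lemma continuous_bounded (f : R -> R) a b : a <= b -> (forall x, continuous f x) ->
  exists M, forall x, a <= x <= b -> Rabs (f x) <= M.
Proof.
  intros Hab Hc.
  destruct (continuity_ab_maj (fun x => Rabs (f x)) a b Hab) as [Mx [HM _]].
  - intros c _. apply continuity_pt_comp with (f1 := f) (f2 := Rabs).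
    + apply continuity_pt_filterlim. apply Hc.
    + apply Rcontinuity_abs.
  - exists (Rabs (f Mx)). exact HM.
Qed.

(* [sumN f N] is [f 0 + ... + f (N-1)] (N terms), unlike Coquelicot's [sum_n]. *)
Fixpoint sumN (f : nat -> R) (N : nat) : R :=
  match N with O => 0 | S n => sumN f n + f n end.

Lemma sumN_ext f g N : (forall j, (j < N)%nat -> f j = g j) -> sumN f N = sumN g N.
Proof. induction N; intros H; simpl; auto. rewrite IHN, H; auto. Qed.

Lemma sumN_plus f g N : sumN (fun j => f j + g j) N = sumN f N + sumN g N.
Proof. induction N; simpl; [ring|rewrite IHN; ring]. Qed.

Lemma sumN_minus f g N : sumN (fun j => f j - g j) N = sumN f N - sumN g N.
Proof. induction N; simpl; [ring|rewrite IHN; ring]. Qed.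

Lemma sumN_scal c f N : sumN (fun j => c * f j) N = c * sumN f N.
Proof. induction N; simpl; [ring|rewrite IHN; ring]. Qed.

Lemma sumN_const c N : sumN (fun _ => c) N = INR N * c.
Proof. induction N; simpl sumN; [simpl; ring|rewrite IHN, S_INR; ring]. Qed.

Lemma sumN_zero f N : (forall j, (j < N)%nat -> f j = 0) -> sumN f N = 0.
Proof. intros H. rewrite (sumN_ext _ (fun _ => 0)); auto. rewrite sumN_const; ring. Qed.

Lemma sumN_telescope g N : sumN (fun j => g (S j) - g j) N = g N - g O.
Proof. induction N; simpl; [ring|rewrite IHN; ring]. Qed.

Lemma sumN_abs_le f b N :
  (forall j, (j < N)%nat -> Rabs (f j) <= b) -> Rabs (sumN f N) <= INR N * b.
Proof.
  induction N; intros H; cbn [sumN]; [rewrite Rabs_R0; simpl; lra|].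
  rewrite S_INR. eapply Rle_trans; [apply Rabs_triang|].
  assert (Rabs (sumN f N) <= INR N * b) by (apply IHN; intros; apply H; lia).
  assert (Rabs (f N) <= b) by (apply H; lia). lra.
Qed.

Lemma sumN_swap (f : nat -> nat -> R) A B :
  sumN (fun l => sumN (fun j => f l j) A) B = sumN (fun j => sumN (fun l => f l j) B) A.
Proof.
  induction B; simpl; [symmetry; apply sumN_zero; auto|].
  rewrite IHB, <- sumN_plus. reflexivity.
Qed.

Lemma sumN_shift f N : sumN f (S N) = f O + sumN (fun j => f (S j)) N.
Proof. induction N; cbn [sumN]; [ring|]. cbn [sumN] in IHN. rewrite IHN. ring. Qed.

Lemma sumN_pred f N : (0 < N)%nat -> sumN f N = sumN f (N - 1) + f (N - 1)%nat.
Proof. intros H. destruct N; [lia|]. simpl. rewrite Nat.sub_0_r. reflexivity. Qed.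

Lemma sumN_shift_pred f N : (0 < N)%nat -> sumN f N = f O + sumN (fun j => f (S j)) (N - 1).
Proof.
  intros H. destruct N; [lia|]. rewrite sumN_shift. simpl. rewrite Nat.sub_0_r. reflexivity.
Qed.

Lemma sumN_split f A B : sumN f (A + B) = sumN f A + sumN (fun j => f (A + j)%nat) B.
Proof.
  induction B; [rewrite Nat.add_0_r; simpl; ring|].
  rewrite Nat.add_succ_r; cbn [sumN]. rewrite IHB; ring.
Qed.

Lemma sumN_even_odd f N :
  sumN f (2 * N) = sumN (fun j => f (2 * j)%nat) N + sumN (fun j => f (S (2 * j))) N.
Proof.
  induction N; [simpl; ring|].
  replace (2 * S N)%nat with (S (S (2 * N))) by lia. cbn [sumN]. rewrite IHN. ring.
Qed.

Lemma sumN_rev f N : sumN f N = sumN (fun j => f (N - S j)%nat) N.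
Proof.
  revert f; induction N; intro f; [reflexivity|].
  rewrite sumN_shift. cbn [sumN].
  rewrite (IHN (fun j => f (S j))). replace (S N - S N)%nat with O by lia.
  rewrite (sumN_ext (fun j => f (S N - S j)%nat) (fun j => f (S (N - S j)))); [ring|].
  intros; f_equal; lia.
Qed.

Lemma sumN_RInt_Chasles (F : R -> R) (x : nat -> R) N : (forall t, continuous F t) ->
  sumN (fun j => RInt F (x j) (x (S j))) N = RInt F (x O) (x N).
Proof.
  intros Hc. induction N; simpl; [rewrite RInt_point; reflexivity|].
  rewrite IHN. apply (@RInt_Chasles R_CompleteNormedModule); apply ex_RInt_continuousR; auto.
Qed.

Lemma sum_n_m_sumN (g : nat -> R) N : sum_n_m g 1 N = sumN (fun j => g (S j)) N.
Proof.
  induction N; [rewrite sum_n_m_zero by lia; reflexivity|].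
  rewrite sum_n_Sm by lia. rewrite IHN. reflexivity.
Qed.

(** * The trapezoidal rule for smooth periodic functions *)

(* [bern k] is the Bernoulli polynomial B_(k+1) / (k+1)! on [0,1]: it starts from
   t - 1/2, and each step takes the antiderivative with mean zero over [0,1]. *)
Fixpoint bern (k : nat) (t : R) : R :=
  match k with
  | O => t - 1/2
  | S k => RInt (bern k) 0 t - RInt (fun s => RInt (bern k) 0 s) 0 1
  end.

Lemma bern_spec k : (forall t, continuous (bern k) t)
  /\ (forall t, is_derive (bern (S k)) t (bern k t)) /\ RInt (bern k) 0 1 = 0.
Proof.
  induction k as [|k [Hc [Hd Hi]]].
  - assert (Hc : forall t, continuous (bern 0) t).
    { intro t. apply (ex_derive_continuousR (fun t => t - 1/2)). auto_derive; auto. }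
    split; [exact Hc|split].
    + intro t. replace (bern 0 t) with (bern 0 t - 0) by ring.
      apply (is_derive_minus (fun t => RInt (bern 0) 0 t)
               (fun _ => RInt (fun s => RInt (bern 0) 0 s) 0 1)).
      * exact (is_derive_RInt_from_0 _ t Hc).
      * apply (@is_derive_const R_AbsRing R_NormedModule).
    + rewrite (RInt_derive (fun t => t*t/2 - t/2)); [simpl; field| |intros; apply Hc].
      intros x _. simpl. auto_derive; auto. field.
  - assert (Hc' : forall t, continuous (bern (S k)) t).
    { intro t. eapply ex_derive_continuousR. eexists. apply Hd. }
    split; [exact Hc'|split].
    + intro t. replace (bern (S k) t) with (bern (S k) t - 0) by ring.
      apply (is_derive_minus (fun t => RInt (bern (S k)) 0 t)
               (fun _ => RInt (fun s => RInt (bern (S k)) 0 s) 0 1)).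
      * exact (is_derive_RInt_from_0 _ t Hc').
      * apply (@is_derive_const R_AbsRing R_NormedModule).
    + change (bern (S k)) with (fun t => RInt (bern k) 0 t - RInt (fun s => RInt (bern k) 0 s) 0 1).
      rewrite (RInt_minus (fun t => RInt (bern k) 0 t)
                 (fun _ => RInt (fun s => RInt (bern k) 0 s) 0 1)).
      * rewrite RInt_const. unfold minus, plus, opp, scal; simpl. unfold mult; simpl. ring.
      * apply ex_RInt_ex_derive. intro x. eexists. apply is_derive_RInt_from_0; auto.
      * apply ex_RInt_const.
Qed.

Lemma is_derive_bern k t : is_derive (bern (S k)) t (bern k t).
Proof. apply bern_spec. Qed.

Lemma ex_derive_bern k t : ex_derive (bern k) t.
Proof. destruct k; [simpl; auto_derive; auto|eexists; apply is_derive_bern]. Qed.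

Lemma bern_S_1 k : bern (S k) 1 = bern (S k) 0.
Proof. simpl. destruct (bern_spec k) as [_ [_ ->]]. rewrite RInt_point. reflexivity. Qed.

Lemma RInt_mult_by_parts_cell (q dq G dG : R -> R) u h : 0 < h ->
  (forall t, is_derive q t (dq t)) -> (forall t, ex_derive dq t) ->
  (forall x, is_derive G x (dG x)) -> (forall x, ex_derive dG x) ->
  RInt (fun x => dq ((x-u)/h) * G x) u (u+h) =
    h * (q 1 * G (u+h) - q 0 * G u) - h * RInt (fun x => q ((x-u)/h) * dG x) u (u+h).
Proof.
  intros Hh Hq Hdq HG HdG.
  assert (Hqc : forall x, is_derive (fun x => q ((x-u)/h)) x (/h * dq ((x-u)/h))).
  { intro x. apply (is_derive_comp q (fun x => (x-u)/h)); [apply Hq|].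
    auto_derive; auto. field; lra. }
  assert (Hd : forall x, ex_derive (fun x => dq ((x-u)/h)) x).
  { intro x. apply ex_derive_comp; [apply Hdq|auto_derive; auto]. }
  assert (Hqd : forall x, ex_derive (fun x => q ((x-u)/h)) x) by (intro x; eexists; apply Hqc).
  assert (HGd : forall x, ex_derive G x) by (intro x; eexists; apply HG).
  assert (E : RInt (fun x => dq ((x-u)/h) * G x + h * (q ((x-u)/h) * dG x)) u (u+h)
            = h * q ((u + h - u)/h) * G (u+h) - h * q ((u - u)/h) * G u).
  { apply (RInt_derive (fun x => h * q ((x-u)/h) * G x)).
    - intros x _.
      apply is_derive_ext with (f := fun x => h * (q ((x-u)/h) * G x)).
      { intro; symmetry; apply Rmult_assoc. }
      replace (dq ((x - u) / h) * G x + h * (q ((x - u) / h) * dG x))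
        with (h * ((/h * dq ((x-u)/h)) * G x + q ((x-u)/h) * dG x)) by (field; lra).
      apply is_derive_scal. apply (is_derive_mult (fun x => q ((x-u)/h)) G); auto.
      intros; apply Rmult_comm.
    - intros x _. apply ex_derive_continuousR, ex_derive_plusR.
      + apply ex_derive_mult; auto.
      + apply ex_derive_scal, ex_derive_mult; auto. }
  replace ((u + h - u) / h) with 1 in E by (field; lra).
  replace ((u - u) / h) with 0 in E by (field; lra).
  rewrite RInt_plusR, RInt_scalR in E.
  - set (A := RInt (fun x => dq ((x - u) / h) * G x) u (u + h)) in *.
    set (B := RInt (fun x => q ((x - u) / h) * dG x) u (u + h)) in *.
    change (@eq R A (h * (q 1 * G (u + h) - q 0 * G u) - h * B)).
    change (@eq R (A + h * B) (h * q 1 * G (u + h) - h * q 0 * G u)) in E.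
    lra.
  - apply ex_RInt_ex_derive; intro x. apply ex_derive_mult; auto.
  - apply ex_RInt_ex_derive; intro x. apply ex_derive_mult; auto.
  - apply ex_RInt_ex_derive; intro x. apply ex_derive_scal, ex_derive_mult; auto.
Qed.

Section TrapezoidPeriodic.
Variables (F : R -> R) (P x0 : R).
Hypothesis P_pos : 0 < P.
Hypothesis F_periodic : forall x, F (x + P) = F x.
Hypothesis F_smooth : forall k x, ex_derive (Derive_n F k) x.

Lemma is_derive_Derive_n_F k x : is_derive (Derive_n F k) x (Derive_n F (S k) x).
Proof. apply Derive_correct, F_smooth. Qed.

Variable N : nat.
Hypothesis N_pos : (0 < N)%nat.
Let h := P / INR N.
Let node (j : nat) := x0 + INR j * h.

Lemma mesh_pos : 0 < h.
Proof. unfold h. apply Rdiv_lt_0_compat; auto. apply lt_0_INR; auto. Qed.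

Lemma node_S j : node (S j) = node j + h.
Proof. unfold node. rewrite S_INR. ring. Qed.

Lemma node_0 : node O = x0.
Proof. unfold node; simpl; ring. Qed.

Lemma node_N : node N = x0 + P.
Proof. unfold node, h. field. apply not_0_INR. lia. Qed.

Definition em_remainder k :=
  sumN (fun j => RInt (fun x => bern k ((x - node j)/h) * Derive_n F (S k) x)
                      (node j) (node j + h)) N.

Lemma trapezoid_error_remainder_0 :
  h * sumN (fun j => F (node j)) N - RInt F x0 (x0 + P) = h * em_remainder 0.
Proof.
  assert (Hcell : forall j,
    h * RInt (fun x => bern 0 ((x - node j)/h) * Derive_n F 1 x) (node j) (node j + h)
     = h / 2 * (F (node (S j)) - F (node j)) + h * F (node j) - RInt F (node j) (node (S j))).
  { intro j. rewrite node_S, <- (RInt_ext (fun x => 1 * F x) F) by (intros; apply Rmult_1_l).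
    rewrite (RInt_mult_by_parts_cell (bern 0) (fun _ => 1) F (Derive_n F 1) (node j) h mesh_pos).
    - simpl. field.
    - intro t. simpl. auto_derive; auto; ring.
    - intro; apply ex_derive_const.
    - intro x. apply (is_derive_Derive_n_F 0).
    - intro x. apply F_smooth. }
  replace (h * em_remainder 0) with (sumN (fun j =>
      h * RInt (fun x => bern 0 ((x - node j)/h) * Derive_n F 1 x) (node j) (node j + h)) N)
    by (unfold em_remainder; rewrite sumN_scal; reflexivity).
  rewrite (sumN_ext _ _ N (fun j _ => Hcell j)).
  rewrite sumN_minus, sumN_plus, sumN_scal, sumN_scal, (sumN_telescope (fun j => F (node j))).
  rewrite sumN_RInt_Chasles by (intro; apply ex_derive_continuousR, (F_smooth 0)).
  rewrite node_N, node_0, F_periodic. ring.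
Qed.

Lemma em_remainder_S k : em_remainder k = - h * em_remainder (S k).
Proof.
  assert (Hcell : forall j,
    RInt (fun x => bern k ((x - node j)/h) * Derive_n F (S k) x) (node j) (node j + h)
     = h * bern (S k) 0 * (Derive_n F (S k) (node (S j)) - Derive_n F (S k) (node j))
       - h * RInt (fun x => bern (S k) ((x - node j)/h) * Derive_n F (S (S k)) x)
                  (node j) (node j + h)).
  { intro j. rewrite (RInt_mult_by_parts_cell (bern (S k)) (bern k) (Derive_n F (S k))
                        (Derive_n F (S (S k))) (node j) h mesh_pos).
    - rewrite bern_S_1, node_S. as_real_eq; ring.
    - apply is_derive_bern.
    - apply ex_derive_bern.
    - intro x. apply is_derive_Derive_n_F.
    - intro x. apply F_smooth. }
  unfold em_remainder at 1. rewrite (sumN_ext _ _ N (fun j _ => Hcell j)).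
  rewrite sumN_minus, !sumN_scal, (sumN_telescope (fun j => Derive_n F (S k) (node j))).
  rewrite node_N, node_0, <- Derive_n_comp_trans.
  rewrite (Derive_n_ext (fun y => F (y + P)) F) by apply F_periodic.
  unfold em_remainder. ring.
Qed.

Lemma trapezoid_error_remainder k :
  h * sumN (fun j => F (node j)) N - RInt F x0 (x0 + P) = h * (- h) ^ k * em_remainder k.
Proof.
  rewrite trapezoid_error_remainder_0. induction k; [simpl; ring|].
  rewrite IHk, em_remainder_S. simpl. ring.
Qed.

Lemma em_remainder_bound k B M :
  (forall t, 0 <= t <= 1 -> Rabs (bern k t) <= B) ->
  (forall x, x0 <= x <= x0 + P -> Rabs (Derive_n F (S k) x) <= M) ->
  Rabs (em_remainder k) <= P * (B * M).
Proof.
  intros HB HM. pose proof mesh_pos as Hh.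
  replace (P * (B * M)) with (INR N * (h * (B * M))) by (unfold h; field; apply not_0_INR; lia).
  apply sumN_abs_le. intros j Hj.
  assert (Hx0 : x0 <= node j) by (unfold node; pose proof (pos_INR j); nra).
  assert (Hx1 : node j + h <= x0 + P).
  { rewrite <- node_S, <- node_N. unfold node.
    apply Rplus_le_compat_l, Rmult_le_compat_r; [lra|apply le_INR; lia]. }
  replace (h * (B * M)) with ((node j + h - node j) * (B * M)) by ring.
  apply abs_RInt_le_const; [lra| |].
  - apply ex_RInt_ex_derive. intro x. apply ex_derive_mult; [|apply F_smooth].
    apply ex_derive_comp; [apply ex_derive_bern|auto_derive; auto].
  - intros t Ht. rewrite Rabs_mult. apply Rmult_le_compat; try apply Rabs_pos.
    + apply HB. split; [apply Rdiv_le_0_compat; lra|].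
      apply (Rmult_le_reg_r h); auto. unfold Rdiv; rewrite Rmult_assoc, Rinv_l; lra.
    + apply HM. lra.
Qed.

End TrapezoidPeriodic.

Theorem trapezoid_periodic_error (F : R -> R) (P x0 : R) (k : nat) :
  0 < P -> (forall x, F (x + P) = F x) -> (forall k x, ex_derive (Derive_n F k) x) ->
  exists C, forall N, (0 < N)%nat ->
    Rabs (P / INR N * sumN (fun j => F (x0 + INR j * (P / INR N))) N - RInt F x0 (x0 + P))
      <= C * (P / INR N) ^ (S k).
Proof.
  intros HP HPer HSm.
  destruct (continuous_bounded (bern k) 0 1) as [B HB];
    [lra|intro; apply ex_derive_continuousR, ex_derive_bern|].
  destruct (continuous_bounded (Derive_n F (S k)) x0 (x0 + P)) as [M HM];
    [lra|intro; apply ex_derive_continuousR, HSm|].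
  exists (P * (B * M)). intros N HN.
  rewrite (trapezoid_error_remainder F P x0 HP HPer HSm N HN k).
  pose proof (mesh_pos P HP N HN) as Hh. set (h := P / INR N) in *.
  rewrite !Rabs_mult, <- RPow_abs, Rabs_Ropp, (Rabs_right h) by lra.
  replace (P * (B * M) * h ^ S k) with (h * h ^ k * (P * (B * M))) by (simpl; ring).
  apply Rmult_le_compat_l; [apply Rmult_le_pos; [lra|apply pow_le; lra]|].
  apply em_remainder_bound; auto.
Qed.

(** * Sums of squared cosecants *)

(* At the multiples of [PI] the junk value [/ 0 = 0] makes [csc2] vanish. *)
Definition csc2 x := / (sin x)^2.

Lemma csc2_0 : csc2 0 = 0.
Proof. unfold csc2. rewrite sin_0. simpl. rewrite Rmult_0_l. apply Rinv_0. Qed.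

Lemma csc2_double x : sin x <> 0 -> cos x <> 0 -> csc2 (2 * x) = / 4 * (csc2 x + / cos x ^ 2).
Proof.
  intros Hs Hc. pose proof (sin2_cos2 x) as E. unfold Rsqr in E. unfold csc2. rewrite sin_2a.
  replace (/ 4 * (/ sin x ^ 2 + / cos x ^ 2))
    with ((sin x * sin x + cos x * cos x) / (4 * sin x ^ 2 * cos x ^ 2)) by (field; auto).
  rewrite E. field. auto.
Qed.

Definition dirichlet (j : nat) (t : R) := 1 + 2 * sumN (fun k => cos (INR (S k) * t)) j.

Lemma dirichlet_mul_sin j t : dirichlet j t * sin (t/2) = sin ((INR j + /2) * t).
Proof.
  induction j; unfold dirichlet in *; cbn [sumN].
  - change (INR 0) with 0. replace ((0 + /2) * t) with (t/2) by field. ring.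
  - set (D := 1 + 2 * sumN (fun k => cos (INR (S k) * t)) j) in *.
    replace ((1 + 2 * (sumN (fun k => cos (INR (S k) * t)) j + cos (INR (S j) * t))) * sin (t / 2))
      with (D * sin (t / 2) + 2 * cos (INR (S j) * t) * sin (t/2)) by (unfold D; ring).
    rewrite IHj.
    replace ((INR (S j) + / 2) * t) with (INR (S j) * t + t/2) by (rewrite S_INR; field).
    replace ((INR j + / 2) * t) with (INR (S j) * t - t/2) by (rewrite S_INR; field).
    rewrite sin_plus, sin_minus. ring.
Qed.

Lemma sum_dirichlet_mul_sin2 n t :
  sumN (fun j => dirichlet j t) n * (sin (t/2))^2 = (sin (INR n * t / 2))^2.
Proof.
  assert (Hj : forall j,
    (sin (t/2))^2 * dirichlet j t = (-/2) * (cos (INR (S j) * t) - cos (INR j * t))).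
  { intro j. replace ((sin (t/2))^2 * dirichlet j t) with ((dirichlet j t * sin (t/2)) * sin (t/2))
      by ring.
    rewrite dirichlet_mul_sin.
    replace (INR j * t) with ((INR j + /2) * t - t/2) by field.
    replace (INR (S j) * t) with ((INR j + /2) * t + t/2) by (rewrite S_INR; field).
    rewrite cos_minus, cos_plus. field. }
  rewrite Rmult_comm, <- sumN_scal, (sumN_ext _ _ n (fun j _ => Hj j)).
  rewrite sumN_scal, (sumN_telescope (fun j => cos (INR j * t))).
  replace (INR n * t) with (2 * (INR n * t / 2)) at 1 by field.
  rewrite cos_2a_sin. change (INR 0) with 0. rewrite Rmult_0_l, cos_0. field.
Qed.

Lemma sum_cos_odd_multiples n m : (1 <= m < n)%nat ->
  sumN (fun l => cos (INR m * (PI * (2 * INR l + 1) / INR n))) n = 0.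
Proof.
  intros Hm. set (th := INR m * PI / INR n).
  assert (Hn : 0 < INR n) by (apply lt_0_INR; lia).
  assert (Hth : 0 < sin th).
  { assert (0 < INR m < INR n) by (split; [apply lt_0_INR|apply lt_INR]; lia).
    pose proof PI_RGT_0. apply sin_gt_0; unfold th.
    - apply Rdiv_lt_0_compat; nra.
    - apply (Rmult_lt_reg_r (INR n)); [lra|].
      replace (INR m * PI / INR n * INR n) with (INR m * PI) by (field; lra). nra. }
  apply (Rmult_eq_reg_l (2 * sin th)); [|lra].
  rewrite Rmult_0_r, <- sumN_scal.
  rewrite (sumN_ext _ (fun l => sin (INR (S l) * (2 * th)) - sin (INR l * (2 * th)))).
  - rewrite (sumN_telescope (fun l => sin (INR l * (2 * th)))).
    replace (INR n * (2 * th)) with (IZR (2 * Z.of_nat m) * PI).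
    + rewrite sin_eq_0_1; [|eexists; reflexivity]. simpl. rewrite Rmult_0_l, sin_0. ring.
    + unfold th. rewrite mult_IZR, <- INR_IZR_INZ. simpl. field. lra.
  - intros l _.
    replace (INR m * (PI * (2 * INR l + 1) / INR n)) with (INR (S l) * (2 * th) - th)
      by (unfold th; rewrite S_INR; field; lra).
    replace (INR l * (2 * th)) with (INR (S l) * (2 * th) - 2 * th) by (rewrite S_INR; ring).
    pose proof (sin2_cos2 th) as E. unfold Rsqr in E.
    rewrite cos_minus, !sin_minus, sin_2a, cos_2a_sin.
    replace (cos th * cos th) with (1 - sin th * sin th) by lra. ring.
Qed.

(* Summing the Fejer identity [sum_dirichlet_mul_sin2] over the points
   t_l = (2l+1) PI / n: there [sin (n t_l / 2) ^ 2 = 1], while the cosine terms of the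
   Dirichlet kernels cancel by [sum_cos_odd_multiples]. *)
Lemma sum_csc2_odd n : (0 < n)%nat ->
  sumN (fun l => csc2 (PI * (2 * INR l + 1) / (2 * INR n))) n = INR n ^ 2.
Proof.
  intros Hn0. assert (Hn : 0 < INR n) by (apply lt_0_INR; lia).
  set (t := fun l => PI * (2 * INR l + 1) / INR n).
  rewrite (sumN_ext _ (fun l => sumN (fun j => dirichlet j (t l)) n)).
  - unfold dirichlet. rewrite sumN_swap, (sumN_ext _ (fun j => INR n * 1 + 2 * 0)).
    + rewrite sumN_const. simpl. ring.
    + intros j Hj. rewrite sumN_plus, sumN_const, sumN_scal, sumN_swap, sumN_zero; [reflexivity|].
      intros k Hk. apply sum_cos_odd_multiples. lia.
  - intros l Hl.
    assert (Hs : 0 < sin (t l / 2)).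
    { assert (INR (S l) <= INR n) by (apply le_INR; lia). rewrite S_INR in *.
      pose proof PI_RGT_0. pose proof (pos_INR l).
      apply sin_gt_0; unfold t.
      - apply Rdiv_lt_0_compat; [apply Rdiv_lt_0_compat|]; nra.
      - apply (Rmult_lt_reg_r (2 * INR n)); [lra|].
        replace (PI * (2 * INR l + 1) / INR n / 2 * (2 * INR n)) with (PI * (2 * INR l + 1))
          by (field; lra).
        nra. }
    assert (H1 : (sin (INR n * t l / 2))^2 = 1).
    { replace (INR n * t l / 2) with (PI / 2 + INR l * PI) by (unfold t; field; lra).
      pose proof (sin2_cos2 (PI / 2 + INR l * PI)) as E. unfold Rsqr in E.
      rewrite cos_plus, cos_PI2, sin_PI2, (sin_eq_0_1 (INR l * PI)) in E; [simpl; lra|].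
      exists (Z.of_nat l). rewrite <- INR_IZR_INZ. reflexivity. }
    pose proof (sum_dirichlet_mul_sin2 n (t l)) as H. rewrite H1 in H.
    replace (PI * (2 * INR l + 1) / (2 * INR n)) with (t l / 2) by (unfold t; field; lra).
    apply (Rmult_eq_reg_r ((sin (t l / 2))^2)); [|apply pow_nonzero; lra].
    rewrite H. unfold csc2. field. lra.
Qed.

Section Csc2Sums.
Variable n : nat.
Hypothesis n_pos : (0 < n)%nat.

Definition csc2_half_sum := sumN (fun k => csc2 (PI * INR k / (2 * INR n))) n.
Definition sec2_half_sum := sumN (fun k => / (cos (PI * INR k / (2 * INR n)))^2) n.
Definition csc2_sum m := sumN (fun i => csc2 (PI * INR i / INR m)) m.

Lemma INR_n_pos : 0 < INR n.
Proof. apply lt_0_INR; auto. Qed.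

Lemma PI_INR_0_div x : PI * INR 0 / x = 0.
Proof. simpl. unfold Rdiv. ring. Qed.

Lemma half_angle_range j : (S j < n)%nat -> 0 < PI * INR (S j) / (2 * INR n) < PI / 2.
Proof.
  intros Hj. pose proof INR_n_pos. pose proof PI_RGT_0.
  assert (0 < INR (S j) < INR n) by (split; [apply lt_0_INR|apply lt_INR]; lia).
  split; [apply Rdiv_lt_0_compat; nra|].
  apply (Rmult_lt_reg_r (2 * INR n)); [lra|].
  replace (PI * INR (S j) / (2 * INR n) * (2 * INR n)) with (PI * INR (S j)) by (field; lra).
  nra.
Qed.

Lemma csc2_sum_double_split : csc2_sum (2 * n) = csc2_half_sum + sec2_half_sum.
Proof.
  pose proof INR_n_pos.
  unfold csc2_sum. replace (2 * n)%nat with (n + n)%nat by lia. rewrite sumN_split, plus_INR.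
  f_equal; apply sumN_ext; intros j _; unfold csc2.
  - replace (INR n + INR n) with (2 * INR n) by ring. reflexivity.
  - rewrite plus_INR.
    replace (PI * (INR n + INR j) / (INR n + INR n))
      with (PI / 2 - (- (PI * INR j / (2 * INR n)))) by (field; lra).
    rewrite sin_shift, cos_neg. reflexivity.
Qed.

Lemma csc2_sum_double : csc2_sum (2 * n) = csc2_sum n + INR n ^ 2.
Proof.
  pose proof INR_n_pos.
  unfold csc2_sum. rewrite sumN_even_odd, <- (sum_csc2_odd n n_pos).
  f_equal; apply sumN_ext; intros j _; unfold csc2; rewrite ?S_INR, !mult_INR;
    change (INR 2) with 2.
  - replace (PI * (2 * INR j) / (2 * INR n)) with (PI * INR j / INR n) by (field; lra).
    reflexivity.
  - reflexivity.
Qed.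

Lemma sec2_half_sum_reflect : sec2_half_sum = 1 + csc2_half_sum.
Proof.
  pose proof INR_n_pos.
  unfold sec2_half_sum, csc2_half_sum. rewrite sumN_rev.
  rewrite (sumN_ext _ (fun j => csc2 (PI * INR (S j) / (2 * INR n)))).
  - rewrite (sumN_pred (fun j => csc2 (PI * INR (S j) / (2 * INR n))) n n_pos).
    rewrite (sumN_shift_pred (fun k => csc2 (PI * INR k / (2 * INR n))) n n_pos).
    rewrite PI_INR_0_div, csc2_0. replace (S (n - 1)) with n by lia.
    replace (csc2 (PI * INR n / (2 * INR n))) with 1; [ring|].
    unfold csc2. replace (PI * INR n / (2 * INR n)) with (PI / 2) by (field; lra).
    rewrite sin_PI2. field.
  - intros j Hj. unfold csc2. rewrite minus_INR, S_INR by lia.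
    replace (PI * (INR n - (INR j + 1)) / (2 * INR n))
      with (PI / 2 - PI * (INR j + 1) / (2 * INR n)) by (field; lra).
    rewrite cos_shift. reflexivity.
Qed.

Lemma csc2_sum_duplication : csc2_sum n = (csc2_half_sum + sec2_half_sum) / 4 - / 4.
Proof.
  pose proof INR_n_pos.
  unfold csc2_sum, csc2_half_sum, sec2_half_sum. rewrite !(sumN_shift_pred _ n n_pos).
  rewrite !PI_INR_0_div, csc2_0, cos_0.
  rewrite (sumN_ext _ (fun j => / 4 * (csc2 (PI * INR (S j) / (2 * INR n))
                                     + / cos (PI * INR (S j) / (2 * INR n)) ^ 2))).
  - rewrite sumN_scal, sumN_plus. field.
  - intros j Hj. pose proof (half_angle_range j ltac:(lia)) as Hx.
    replace (PI * INR (S j) / INR n) with (2 * (PI * INR (S j) / (2 * INR n))) by (field; lra).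
    apply csc2_double; [apply Rgt_not_eq, sin_gt_0|apply Rgt_not_eq, cos_gt_0]; lra.
Qed.

(* The four identities above form a linear system in [csc2_sum n], [csc2_sum (2n)],
   [csc2_half_sum] and [sec2_half_sum]. *)
Lemma csc2_half_sum_value : 2 * csc2_half_sum + 1 = (4 * INR n ^ 2 - 1) / 3.
Proof.
  pose proof csc2_sum_double_split. pose proof csc2_sum_double.
  pose proof sec2_half_sum_reflect. pose proof csc2_sum_duplication.
  lra.
Qed.

End Csc2Sums.

Lemma CV_radius_gt_of_is_pseries (c : nat -> R) (r : R) (g : R -> R) :
  (forall x, Rabs x < r -> is_pseries c x (g x)) ->
  forall x, Rabs x < r -> Rbar_lt (Rabs x) (CV_radius c).
Proof.
  intros H x Hx.
  set (y := (Rabs x + r) / 2).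
  assert (Hy : Rabs y < r) by (unfold y; pose proof (Rabs_pos x); rewrite Rabs_right; lra).
  destruct (Rbar_lt_le_dec (CV_radius c) (Rabs y)) as [Hl|Hl].
  - exfalso. apply (CV_disk_outside c y Hl).
    eapply is_lim_seq_ext; [|exact (ex_series_lim_0 _ (ex_intro _ _ (H y Hy)))].
    intro n. simpl. unfold scal; simpl. unfold mult; simpl. rewrite pow_n_pow. ring.
  - eapply Rbar_lt_le_trans; [|exact Hl]. simpl. unfold y.
    pose proof (Rabs_pos x). rewrite (Rabs_right ((Rabs x + r)/2)); lra.
Qed.

Lemma CV_radius_sin_n : CV_radius sin_n = p_infty.
Proof.
  apply CV_radius_infinite_DAlembert; [apply sin_no_R0|].
  apply is_lim_seq_Reals, Alembert_sin.
Qed.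

Lemma cos_n_neq_0 n : cos_n n <> 0.
Proof.
  unfold cos_n. apply Rmult_integral_contrapositive_currified; [apply pow_nonzero; lra|].
  apply Rinv_neq_0_compat, not_0_INR, Factorial.fact_neq_0.
Qed.

Lemma CV_radius_cos_n : CV_radius cos_n = p_infty.
Proof.
  apply CV_radius_infinite_DAlembert; [apply cos_n_neq_0|].
  apply is_lim_seq_Reals, Alembert_cos.
Qed.

Definition sinc t := PSeries sin_n (t * t).
Definition sinc_tail t := PSeries (PS_decr_1 sin_n) (t * t).
Definition cos_tail t := PSeries (PS_decr_1 cos_n) (t * t).

Lemma sin_sinc t : sin t = t * sinc t.
Proof.
  unfold sin, sinc. destruct (exist_sin (Rsqr t)) as [l Hl]. f_equal.
  symmetry. apply is_pseries_unique, is_pseries_Reals. exact Hl.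
Qed.

Lemma sinc_sinc_tail t : sinc t = 1 + t * t * sinc_tail t.
Proof.
  unfold sinc, sinc_tail. rewrite PSeries_decr_1; [unfold sin_n; simpl; field|].
  apply CV_radius_inside. rewrite CV_radius_sin_n. simpl; auto.
Qed.

Lemma cos_cos_tail t : cos t = 1 + t * t * cos_tail t.
Proof.
  unfold cos, cos_tail. destruct (exist_cos (Rsqr t)) as [l Hl].
  replace l with (PSeries cos_n (t * t))
    by (apply is_pseries_unique, is_pseries_Reals; exact Hl).
  rewrite PSeries_decr_1; [unfold cos_n; simpl; field|].
  apply CV_radius_inside. rewrite CV_radius_cos_n. simpl; auto.
Qed.

Lemma sinc_0 : sinc 0 = 1.
Proof. unfold sinc. rewrite Rmult_0_l, PSeries_0. unfold sin_n; simpl. field. Qed.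

Lemma sinc_tail_0 : sinc_tail 0 = - / 6.
Proof. unfold sinc_tail. rewrite Rmult_0_l, PSeries_0. unfold PS_decr_1, sin_n; simpl. field. Qed.

Lemma smooth_upto_PSeries_sq (a : nat -> R) k : CV_radius a = p_infty ->
  smooth_upto k (fun _ => True) (fun t => PSeries a (t * t)).
Proof.
  intros H. apply (smooth_upto_comp _ (fun _ => True)); try apply open_true; auto.
  - apply smooth_upto_PSeries_entire; auto.
  - apply smooth_upto_mult; [apply open_true|apply smooth_upto_id|apply smooth_upto_id].
Qed.

Lemma smooth_upto_sinc k : smooth_upto k (fun _ => True) sinc.
Proof. apply smooth_upto_PSeries_sq, CV_radius_sin_n. Qed.

Lemma smooth_upto_sinc_tail k : smooth_upto k (fun _ => True) sinc_tail.
Proof. apply smooth_upto_PSeries_sq. rewrite CV_radius_decr_1. apply CV_radius_sin_n. Qed.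

Lemma smooth_upto_cos_tail k : smooth_upto k (fun _ => True) cos_tail.
Proof. apply smooth_upto_PSeries_sq. rewrite CV_radius_decr_1. apply CV_radius_cos_n. Qed.

Lemma smooth_upto_scale (U : R -> Prop) k G c : open U ->
  smooth_upto k (fun _ => True) G -> smooth_upto k U (fun x => G (c * x)).
Proof.
  intros HU HG. apply (smooth_upto_comp U (fun _ => True)); auto using open_true.
  apply smooth_upto_scal, smooth_upto_id.
Qed.

Lemma smooth_upto_sin_scale (U : R -> Prop) k c : open U ->
  smooth_upto k U (fun x => sin (c * x)).
Proof.
  intros HU. apply smooth_upto_scale; auto.
  apply (smooth_upto_ext _ open_true) with (f := fun t => t * sinc t).
  - intros; symmetry; apply sin_sinc.
  - apply smooth_upto_mult; [apply open_true|apply smooth_upto_id|apply smooth_upto_sinc].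
Qed.

Lemma smooth_upto_cos_scale (U : R -> Prop) k c : open U ->
  smooth_upto k U (fun x => cos (c * x)).
Proof.
  intros HU. apply smooth_upto_scale; auto.
  apply (smooth_upto_ext _ open_true) with (f := fun t => 1 + t * t * cos_tail t).
  - intros; symmetry; apply cos_cos_tail.
  - apply smooth_upto_plus; [apply open_true|apply smooth_upto_const|].
    apply smooth_upto_mult; [apply open_true| |apply smooth_upto_cos_tail].
    apply smooth_upto_mult; [apply open_true|apply smooth_upto_id|apply smooth_upto_id].
Qed.

(** * Removing the singular part *)

Section SingularPart.
Variables (a : R) (f phi : R -> R) (delta r0 : R) (cc : nat -> R).
Hypothesis a_pos : 0 < a.
Hypothesis f_periodic : forall x, f (x + 2 * a) = f x.
Hypothesis f_smooth : smooth_off_2aZ f a.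
Hypothesis delta_pos : 0 < delta.
Hypothesis r0_pos : 0 < r0.
Hypothesis phi_pseries : forall x, Rabs (x - 0) < r0 -> is_pseries cc (x - 0) (phi x).
Hypothesis f_near_0 : forall x, 0 < Rabs x < delta -> f x = phi x / x ^ 2.

Definition c := PI / (2 * a).
Definition csc2_part x := c ^ 2 / (sin (c * x)) ^ 2.
Definition cot_part x := c * cos (c * x) / sin (c * x).
Definition phi1 := cc 1%nat.
Definition remainder_at_0 := Derive_n phi 2 0 / 2 - phi 0 * c ^ 2 / 3.
Definition remainder x :=
  if Req_EM_T (sin (c * x)) 0 then remainder_at_0
  else f x - phi 0 * csc2_part x - phi1 * cot_part x.

Lemma c_pos : 0 < c.
Proof. unfold c. apply Rdiv_lt_0_compat; [apply PI_RGT_0|lra]. Qed.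

Lemma c_mul_2a : c * (2 * a) = PI.
Proof. unfold c. field. lra. Qed.

Lemma c_mul_a : c * a = PI / 2.
Proof. unfold c. field. lra. Qed.

Lemma sin_c_pos x : 0 < x <= a -> 0 < sin (c * x).
Proof.
  intros H. pose proof c_pos. pose proof c_mul_2a. apply sin_gt_0; [nra|].
  assert (c * x <= c * a) by (apply Rmult_le_compat_l; lra). nra.
Qed.

Lemma sin_c_neq_0 x : 0 < Rabs x <= a -> sin (c * x) <> 0.
Proof.
  intros H. destruct (Rle_lt_dec 0 x).
  - rewrite Rabs_right in H by lra. pose proof (sin_c_pos x H). lra.
  - rewrite Rabs_left in H by lra. pose proof (sin_c_pos (- x) H).
    replace (c * - x) with (- (c * x)) in * by ring. rewrite sin_neg in *. lra.
Qed.

Lemma sin_c_eq_0 x : sin (c * x) = 0 -> exists k : Z, x = 2 * a * IZR k.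
Proof.
  intros H. destruct (sin_eq_0_0 _ H) as [k Hk]. exists k.
  pose proof c_mul_2a. pose proof c_pos.
  apply (Rmult_eq_reg_l c); [|lra]. rewrite Hk, <- H0. ring.
Qed.

Lemma sin_c_neq_0_off_2aZ x : sin (c * x) <> 0 -> forall k : Z, x <> 2 * a * IZR k.
Proof.
  intros H k ->. apply H, sin_eq_0_1. exists k. rewrite <- c_mul_2a. ring.
Qed.

Lemma sin_c_add_2a x : sin (c * (x + 2 * a)) = - sin (c * x).
Proof.
  replace (c * (x + 2 * a)) with (c * x + PI) by (rewrite <- c_mul_2a; ring).
  rewrite sin_plus, sin_PI, cos_PI. ring.
Qed.

Lemma cos_c_add_2a x : cos (c * (x + 2 * a)) = - cos (c * x).
Proof.
  replace (c * (x + 2 * a)) with (c * x + PI) by (rewrite <- c_mul_2a; ring).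
  rewrite cos_plus, sin_PI, cos_PI. ring.
Qed.

Lemma csc2_part_opp x : csc2_part (- x) = csc2_part x.
Proof.
  unfold csc2_part. replace (c * - x) with (- (c * x)) by ring. rewrite sin_neg. f_equal. ring.
Qed.

Lemma cot_part_opp x : cot_part (- x) = - cot_part x.
Proof.
  unfold cot_part. replace (c * - x) with (- (c * x)) by ring. rewrite sin_neg, cos_neg.
  destruct (Req_dec (sin (c * x)) 0) as [E|E].
  - rewrite E, Ropp_0. unfold Rdiv. rewrite Rinv_0. ring.
  - field. auto.
Qed.

Lemma cot_part_a : cot_part a = 0.
Proof. unfold cot_part. rewrite c_mul_a, cos_PI2. unfold Rdiv. ring. Qed.

Lemma f_decomp x : sin (c * x) <> 0 -> f x = phi 0 * csc2_part x + phi1 * cot_part x + remainder x.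
Proof. intros H. unfold remainder. destruct (Req_EM_T (sin (c * x)) 0); [contradiction|]. ring. Qed.

Lemma remainder_add_2a x : remainder (x + 2 * a) = remainder x.
Proof.
  unfold remainder. rewrite sin_c_add_2a.
  destruct (Req_EM_T (- sin (c * x)) 0); destruct (Req_EM_T (sin (c * x)) 0); try lra; auto.
  unfold csc2_part, cot_part. rewrite f_periodic, sin_c_add_2a, cos_c_add_2a.
  f_equal; [f_equal; f_equal; f_equal; ring|f_equal; field; auto].
Qed.

Lemma remainder_add_2aZ x (k : Z) : remainder (x + 2 * a * IZR k) = remainder x.
Proof.
  assert (Hn : forall (n : nat) x, remainder (x + 2 * a * INR n) = remainder x).
  { induction n; intro y; [simpl; rewrite Rmult_0_r, Rplus_0_r; reflexivity|].
    rewrite S_INR. replace (y + 2 * a * (INR n + 1)) with ((y + 2 * a * INR n) + 2 * a) by ring.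
    rewrite remainder_add_2a. apply IHn. }
  destruct k as [|p|p].
  - simpl. rewrite Rmult_0_r, Rplus_0_r. reflexivity.
  - rewrite <- (positive_nat_Z p), <- INR_IZR_INZ. apply Hn.
  - change (Z.neg p) with (Z.opp (Z.pos p)). rewrite opp_IZR, <- (positive_nat_Z p), <- INR_IZR_INZ.
    rewrite <- (Hn (Pos.to_nat p) (x + 2 * a * - INR (Pos.to_nat p))). f_equal. ring.
Qed.

Lemma phi_eq_PSeries x : Rabs x < r0 -> phi x = PSeries cc x.
Proof.
  intros H. symmetry. apply is_pseries_unique. replace x with (x - 0) at 1 by ring.
  apply phi_pseries. rewrite Rminus_0_r; auto.
Qed.

Lemma CV_radius_cc x : Rabs x < r0 -> Rbar_lt (Rabs x) (CV_radius cc).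
Proof.
  intros H. apply (CV_radius_gt_of_is_pseries cc r0 phi); auto.
  intros y Hy. replace y with (y - 0) at 1 by ring. apply phi_pseries. rewrite Rminus_0_r; auto.
Qed.

Definition phi_tail x := PSeries (PS_decr_1 (PS_decr_1 cc)) x.

Lemma phi_phi_tail x : Rabs x < r0 -> phi x = phi 0 + x * (phi1 + x * phi_tail x).
Proof.
  intros H. rewrite !phi_eq_PSeries by (rewrite ?Rabs_R0; auto).
  unfold phi1, phi_tail. rewrite PSeries_0, PSeries_decr_1, PSeries_decr_1; [reflexivity| |].
  - apply ex_pseries_decr_1. destruct (Req_dec x 0); [left; auto|right].
    exists (/ x). unfold mult, one; simpl. field; auto.
  - apply CV_radius_inside, CV_radius_cc; auto.
  - apply CV_radius_inside, CV_radius_cc; auto.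
Qed.

Lemma Derive_n_phi_2_0 : Derive_n phi 2 0 = 2 * cc 2%nat.
Proof.
  rewrite (Derive_n_ext_loc phi (PSeries cc)).
  - rewrite Derive_n_coef; [simpl; ring|]. pose proof (CV_radius_cc 0). rewrite Rabs_R0 in H. auto.
  - exists (mkposreal r0 r0_pos). intros y Hy. apply phi_eq_PSeries.
    apply ball_Rabs in Hy. replace y with (y - 0) by ring. exact Hy.
Qed.

(* [sin (c x) = x * sinc_c x], [sinc_c x - c = x^2 * sinc_c_tail x] and
   [sinc_c x - c cos (c x) = x * cot_tail x]. *)
Definition sinc_c x := c * sinc (c * x).
Definition sinc_c_tail x := c ^ 3 * sinc_tail (c * x).
Definition cot_tail x := c ^ 3 * x * (sinc_tail (c * x) - cos_tail (c * x)).

(* Writing [f x = phi x / x^2] and [sin (c x) = x * sinc_c x], the double and simple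
   poles of [remainder] at [0] cancel, leaving this quotient. *)
Definition remainder_series x :=
  (phi_tail x * (sinc_c x * sinc_c x) + phi 0 * (sinc_c x + c) * sinc_c_tail x
   + phi1 * sinc_c x * cot_tail x) * / (sinc_c x * sinc_c x).

Lemma sin_sinc_c x : sin (c * x) = x * sinc_c x.
Proof. unfold sinc_c. rewrite sin_sinc. ring. Qed.

Lemma sinc_c_pos x : Rabs x < a -> 0 < sinc_c x.
Proof.
  intros H. pose proof c_pos. destruct (Req_dec x 0) as [->|E].
  - unfold sinc_c. rewrite Rmult_0_r, sinc_0. lra.
  - pose proof (sin_sinc_c x). destruct (Rle_lt_dec 0 x).
    + rewrite Rabs_right in H by lra. pose proof (sin_c_pos x ltac:(lra)). nra.
    + rewrite Rabs_left in H by lra. pose proof (sin_c_pos (- x) ltac:(lra)).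
      replace (c * - x) with (- (c * x)) in * by ring. rewrite sin_neg in *. nra.
Qed.

Definition rad0 := Rmin a (Rmin r0 delta).

Lemma rad0_pos : 0 < rad0.
Proof. unfold rad0. repeat apply Rmin_glb_lt; auto. Qed.

Lemma lt_rad0 x : - rad0 < x < rad0 -> Rabs x < a /\ Rabs x < r0 /\ Rabs x < delta.
Proof.
  unfold rad0. intros [H1 H2].
  pose proof (Rmin_l a (Rmin r0 delta)). pose proof (Rmin_r a (Rmin r0 delta)).
  pose proof (Rmin_l r0 delta). pose proof (Rmin_r r0 delta).
  repeat split; apply Rabs_def1; lra.
Qed.

Lemma remainder_eq_series x : - rad0 < x < rad0 -> remainder x = remainder_series x.
Proof.
  intros Hx. destruct (lt_rad0 x Hx) as [Ha' [Hr' Hd']].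
  pose proof (sinc_c_pos x Ha') as Hs. pose proof c_pos.
  unfold remainder. destruct (Req_EM_T (sin (c * x)) 0) as [E|E].
  - rewrite sin_sinc_c in E. assert (x = 0) by nra. subst.
    unfold remainder_series, remainder_at_0, phi_tail, sinc_c, sinc_c_tail, cot_tail.
    rewrite Derive_n_phi_2_0, Rmult_0_r, sinc_0, sinc_tail_0, PSeries_0.
    change (PS_decr_1 (PS_decr_1 cc) 0) with (cc 2%nat). field. lra.
  - assert (Hx0 : x <> 0) by (intros ->; apply E; rewrite Rmult_0_r; apply sin_0).
    rewrite f_near_0 by (split; auto; apply Rabs_pos_lt; auto).
    rewrite phi_phi_tail by auto. unfold csc2_part, cot_part, remainder_series.
    assert (E1 : sinc_c_tail x = (sinc_c x - c) / (x * x)).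
    { unfold sinc_c, sinc_c_tail. rewrite sinc_sinc_tail. field; auto. }
    assert (E2 : cot_tail x = (sinc_c x - c * cos (c * x)) / x).
    { unfold sinc_c, cot_tail. rewrite sinc_sinc_tail, cos_cos_tail. field; auto. }
    rewrite E1, E2, sin_sinc_c. field. repeat split; lra.
Qed.

Lemma smooth_upto_remainder_series k : smooth_upto k (fun x => - rad0 < x < rad0) remainder_series.
Proof.
  set (U := fun x => - rad0 < x < rad0).
  assert (HO : open U) by (apply open_and; [apply open_gt|apply open_lt]).
  assert (Hs : smooth_upto k U sinc_c)
    by (apply smooth_upto_scal, smooth_upto_scale, smooth_upto_sinc; auto).
  assert (Hst : smooth_upto k U sinc_c_tail)
    by (apply smooth_upto_scal, smooth_upto_scale, smooth_upto_sinc_tail; auto).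
  assert (Hct : smooth_upto k U cot_tail).
  { apply (smooth_upto_ext _ HO) with
      (f := fun x => c ^ 3 * (x * (sinc_tail (c * x) + (-1) * cos_tail (c * x))));
      [intros; unfold cot_tail; ring|].
    apply smooth_upto_scal, smooth_upto_mult; auto using smooth_upto_id.
    apply smooth_upto_plus; auto.
    - apply smooth_upto_scale, smooth_upto_sinc_tail; auto.
    - apply smooth_upto_scal, smooth_upto_scale, smooth_upto_cos_tail; auto. }
  assert (Hp : smooth_upto k U phi_tail).
  { apply (smooth_upto_sub _ (fun x => Rabs x < r0)); [intros x Hx; apply (lt_rad0 x Hx)|].
    apply smooth_upto_PSeries. intros x Hx. rewrite !CV_radius_decr_1. apply CV_radius_cc; auto. }
  assert (Hss : smooth_upto k U (fun x => sinc_c x * sinc_c x)) by (apply smooth_upto_mult; auto).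
  unfold remainder_series. apply smooth_upto_mult; auto.
  - apply smooth_upto_plus; auto. apply smooth_upto_plus; auto.
    + apply smooth_upto_mult; auto.
    + apply (smooth_upto_ext _ HO) with (f := fun x => phi 0 * ((sinc_c x + c) * sinc_c_tail x));
        [intros; ring|].
      apply smooth_upto_scal, smooth_upto_mult; auto.
      apply smooth_upto_plus; auto using smooth_upto_const.
    + apply (smooth_upto_ext _ HO) with (f := fun x => phi1 * (sinc_c x * cot_tail x));
        [intros; ring|].
      apply smooth_upto_scal, smooth_upto_mult; auto.
  - apply smooth_upto_inv; auto. intros x Hx.
    pose proof (sinc_c_pos x (proj1 (lt_rad0 x Hx))). nra.
Qed.

Lemma smooth_upto_remainder_near_pole k x : sin (c * x) = 0 ->
  smooth_upto k (fun y => x - rad0 < y < x + rad0) remainder.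
Proof.
  intros E. destruct (sin_c_eq_0 x E) as [z Hz].
  set (U := fun y => x - rad0 < y < x + rad0).
  assert (HO : open U) by (apply open_and; [apply open_gt|apply open_lt]).
  apply (smooth_upto_ext _ HO) with (f := fun y => remainder (y + - x)).
  - intros y _. rewrite Hz.
    replace y with ((y + - (2 * a * IZR z)) + 2 * a * IZR z) at 2 by ring.
    symmetry. apply remainder_add_2aZ.
  - apply (smooth_upto_comp _ (fun y => - rad0 < y < rad0)); auto.
    + apply open_and; [apply open_gt|apply open_lt].
    + intros y Hy. unfold U in Hy. lra.
    + apply (smooth_upto_ext _ (open_and _ _ (open_gt _) (open_lt _)) _ remainder_series).
      * intros; symmetry; apply remainder_eq_series; auto.
      * apply smooth_upto_remainder_series.
    + apply smooth_upto_plus; auto using smooth_upto_id, smooth_upto_const.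
Qed.

Lemma smooth_upto_remainder_off_poles k (U : R -> Prop) : open U ->
  (forall y, U y -> sin (c * y) <> 0) -> smooth_upto k U remainder.
Proof.
  intros HO HUs.
  apply (smooth_upto_ext _ HO) with (f := fun y => f y
      + (- phi 0) * (c ^ 2 * / (sin (c * y) * sin (c * y)))
      + (- phi1) * (c * (cos (c * y) * / sin (c * y)))).
  { intros y Hy. unfold remainder.
    destruct (Req_EM_T (sin (c * y)) 0) as [E0|E0]; [exfalso; apply (HUs y Hy E0)|].
    unfold csc2_part, cot_part. field. auto. }
  assert (Hsin : smooth_upto k U (fun y => sin (c * y))) by (apply smooth_upto_sin_scale; auto).
  apply smooth_upto_plus; auto. apply smooth_upto_plus; auto.
  - intros m y Hm Hy. apply (f_smooth y (sin_c_neq_0_off_2aZ y (HUs y Hy)) (S m)).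
  - apply smooth_upto_scal; apply smooth_upto_scal; apply (smooth_upto_inv U HO).
    + intros y Hy. apply Rmult_integral_contrapositive; auto.
    + apply smooth_upto_mult; auto.
  - apply smooth_upto_scal; apply smooth_upto_scal; apply smooth_upto_mult; auto.
    + apply smooth_upto_cos_scale; auto.
    + apply (smooth_upto_inv U HO); auto.
Qed.

Lemma remainder_smooth k x : ex_derive (Derive_n remainder k) x.
Proof.
  destruct (Req_EM_T (sin (c * x)) 0) as [E|E].
  - apply (smooth_upto_remainder_near_pole k x E k x); [lia|]. pose proof rad0_pos. lra.
  - assert (Hc : continuous (fun y => sin (c * y)) x).
    { apply ex_derive_continuousR. auto_derive. auto. }
    destruct (Hc (fun z => Rabs (z - sin (c * x)) < Rabs (sin (c * x))))
      as [del Hdel]; [exists (mkposreal _ (Rabs_pos_lt _ E)); auto|].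
    apply (smooth_upto_remainder_off_poles k (fun y => x - del < y < x + del)); auto.
    + apply open_and; [apply open_gt|apply open_lt].
    + intros y Hy E0. absurd (Rabs (sin (c * y) - sin (c * x)) < Rabs (sin (c * x))).
      * rewrite E0, Rminus_0_l, Rabs_Ropp. lra.
      * apply Hdel, ball_Rabs, Rabs_def1; lra.
    + destruct del; simpl; lra.
Qed.

Lemma remainder_continuous x : continuous remainder x.
Proof. apply ex_derive_continuousR, (remainder_smooth 0). Qed.

Lemma ex_RInt_remainder u v : ex_RInt remainder u v.
Proof. apply ex_RInt_continuousR, remainder_continuous. Qed.

(** ** The trapezoidal sum of the singular part *)

Section Grid.
Variable n : nat.
Hypothesis n_pos : (0 < n)%nat.
Let h := a / INR n.

Lemma n_mul_h : INR n * h = a.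
Proof. unfold h. pose proof (INR_n_pos n n_pos). field. lra. Qed.

Lemma c_mul_h : c * h = PI / (2 * INR n).
Proof. pose proof (INR_n_pos n n_pos). unfold h, c. field. split; lra. Qed.

Lemma grid_node_range k : (1 <= k <= n)%nat -> 0 < INR k * h <= a.
Proof.
  intros Hk. pose proof (INR_n_pos n n_pos).
  assert (0 < h) by (unfold h; apply Rdiv_lt_0_compat; lra).
  assert (1 <= INR k <= INR n) by (split; [apply (le_INR 1)|apply le_INR]; lia).
  rewrite <- n_mul_h. nra.
Qed.

Definition grid_sum (g : R -> R) :=
  sumN (fun j => g (- (INR (S j) * h))) n + sumN (fun j => g (INR (S j) * h)) (n - 1).

Lemma trap_sum_grid_sum : trap_sum f a n = h * grid_sum f.
Proof. unfold trap_sum, grid_sum. fold h. rewrite !sum_n_m_sumN. reflexivity. Qed.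

Lemma grid_sum_ext g1 g2 :
  (forall x, 0 < Rabs x <= a -> g1 x = g2 x) -> grid_sum g1 = grid_sum g2.
Proof.
  intros H. unfold grid_sum. f_equal; apply sumN_ext; intros j Hj; apply H;
    rewrite ?Rabs_Ropp, Rabs_right; try apply grid_node_range; try lia;
    apply Rle_ge, Rlt_le, grid_node_range; lia.
Qed.

Lemma grid_sum_lin p q g1 g2 g3 : grid_sum (fun x => p * g1 x + q * g2 x + g3 x)
  = p * grid_sum g1 + q * grid_sum g2 + grid_sum g3.
Proof. unfold grid_sum. rewrite !sumN_plus, !sumN_scal. ring. Qed.

Lemma grid_sum_f :
  grid_sum f = phi 0 * grid_sum csc2_part + phi1 * grid_sum cot_part + grid_sum remainder.
Proof.
  rewrite <- grid_sum_lin. apply grid_sum_ext.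
  intros x Hx. apply f_decomp, sin_c_neq_0; auto.
Qed.

Lemma grid_sum_cot_part : grid_sum cot_part = 0.
Proof.
  unfold grid_sum. rewrite (sumN_pred _ n n_pos). replace (S (n - 1)) with n by lia.
  rewrite (sumN_ext _ (fun j => (-1) * cot_part (INR (S j) * h)))
    by (intros; rewrite cot_part_opp; ring).
  rewrite sumN_scal, cot_part_opp, n_mul_h, cot_part_a. ring.
Qed.

Lemma grid_sum_csc2_part : grid_sum csc2_part = c ^ 2 * (4 * INR n ^ 2 - 1) / 3.
Proof.
  pose proof (INR_n_pos n n_pos).
  assert (Hhalf : csc2_half_sum n = sumN (fun j => csc2 (PI * INR (S j) / (2 * INR n))) (n - 1)).
  { unfold csc2_half_sum. rewrite (sumN_shift_pred _ n n_pos), PI_INR_0_div, csc2_0. ring. }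
  assert (Hgrid : forall k, csc2_part (INR k * h) = c ^ 2 * csc2 (PI * INR k / (2 * INR n))).
  { intro k. unfold csc2_part, csc2.
    replace (c * (INR k * h)) with (PI * INR k / (2 * INR n)); [reflexivity|].
    replace (c * (INR k * h)) with (INR k * (c * h)) by ring. rewrite c_mul_h. field. lra. }
  unfold grid_sum. rewrite (sumN_pred _ n n_pos). replace (S (n - 1)) with n by lia.
  set (g := fun j => c ^ 2 * csc2 (PI * INR (S j) / (2 * INR n))).
  rewrite (sumN_ext (fun j => csc2_part (- (INR (S j) * h))) g)
    by (intros; rewrite csc2_part_opp; apply Hgrid).
  rewrite (sumN_ext (fun j => csc2_part (INR (S j) * h)) g) by (intros; apply Hgrid).
  unfold g.
  rewrite sumN_scal, <- Hhalf, csc2_part_opp, Hgrid.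
  pose proof (csc2_half_sum_value n n_pos) as HQ.
  unfold csc2. replace (PI * INR n / (2 * INR n)) with (PI / 2) by (field; lra).
  rewrite sin_PI2, <- Rmult_div_assoc, <- HQ. field.
Qed.

Lemma grid_sum_remainder :
  grid_sum remainder = sumN (fun j => remainder (- a + INR j * h)) (2 * n) - remainder_at_0.
Proof.
  pose proof (INR_n_pos n n_pos).
  unfold grid_sum. replace (2 * n)%nat with (n + n)%nat by lia.
  rewrite sumN_split, (sumN_rev (fun j => remainder (- a + INR j * h)) n).
  rewrite (sumN_ext (fun j => remainder (- a + INR (n - S j) * h))
                    (fun j => remainder (- (INR (S j) * h)))).
  2: { intros j Hj. f_equal. rewrite minus_INR, S_INR, <- n_mul_h by lia. ring. }
  rewrite (sumN_ext (fun j => remainder (- a + INR (n + j) * h)) (fun j => remainder (INR j * h))).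
  2: { intros j Hj. f_equal. rewrite plus_INR, <- n_mul_h. ring. }
  rewrite (sumN_shift_pred (fun j => remainder (INR j * h)) n n_pos).
  replace (remainder (INR 0 * h)) with remainder_at_0; [ring|].
  unfold remainder. simpl. rewrite Rmult_0_l, Rmult_0_r, sin_0.
  destruct (Req_EM_T 0 0); [reflexivity|lra].
Qed.

Lemma trap_sum_correction : trap_sum f a n - PI ^ 2 / (3 * h) * phi 0 + Derive_n phi 2 0 * h / 2
  = h * sumN (fun j => remainder (- a + INR j * h)) (2 * n).
Proof.
  pose proof (INR_n_pos n n_pos).
  rewrite trap_sum_grid_sum, grid_sum_f, grid_sum_cot_part, grid_sum_csc2_part, grid_sum_remainder.
  unfold remainder_at_0, c, h. field. split; lra.
Qed.

End Grid.

(** ** The finite-part integral *)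

Lemma is_derive_cot_part x : sin (c * x) <> 0 -> is_derive cot_part x (- csc2_part x).
Proof.
  intros H. pose proof (sin2_cos2 (c * x)) as E. unfold Rsqr in E. unfold cot_part, csc2_part.
  replace (c ^ 2 / sin (c * x) ^ 2)
    with (c ^ 2 * (sin (c * x) * sin (c * x) + cos (c * x) * cos (c * x)) / sin (c * x) ^ 2)
    by (rewrite E; field; auto).
  auto_derive; auto. field. auto.
Qed.

Lemma is_derive_ln_abs_sin x :
  sin (c * x) <> 0 -> is_derive (fun x => ln (Rabs (sin (c * x)))) x (cot_part x).
Proof.
  intros H. unfold cot_part. auto_derive; [repeat split; auto; apply Rabs_pos_lt; auto|].
  destruct (Rlt_le_dec 0 (sin (c * x))).
  - rewrite sign_eq_1, Rabs_right by lra. field. auto.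
  - rewrite sign_eq_m1, Rabs_left by lra. field. auto.
Qed.

Lemma ex_derive_csc2_part x : sin (c * x) <> 0 -> ex_derive csc2_part x.
Proof. intros H. unfold csc2_part. auto_derive. auto. Qed.

Lemma ex_derive_cot_part x : sin (c * x) <> 0 -> ex_derive cot_part x.
Proof. intros H. eexists. apply is_derive_cot_part. auto. Qed.

Section NoPole.
Variables u v : R.
Hypothesis u_le_v : u <= v.
Hypothesis no_pole : forall x, u <= x <= v -> sin (c * x) <> 0.

Lemma no_pole_minmax x : Rmin u v <= x <= Rmax u v -> sin (c * x) <> 0.
Proof. rewrite Rmin_left, Rmax_right by lra. apply no_pole. Qed.

Lemma RInt_csc2_part : RInt csc2_part u v = cot_part u - cot_part v.
Proof.
  rewrite (RInt_derive (fun x => - cot_part x)); [as_real_eq; ring| |].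
  - intros x Hx. replace (csc2_part x) with (- - csc2_part x) by ring.
    apply (is_derive_opp cot_part), is_derive_cot_part, no_pole_minmax; auto.
  - intros x Hx. apply ex_derive_continuousR, ex_derive_csc2_part, no_pole_minmax; auto.
Qed.

Lemma RInt_cot_part :
  RInt cot_part u v = ln (Rabs (sin (c * v))) - ln (Rabs (sin (c * u))).
Proof.
  apply (RInt_derive (fun x => ln (Rabs (sin (c * x))))).
  - intros x Hx. apply is_derive_ln_abs_sin, no_pole_minmax; auto.
  - intros x Hx. apply ex_derive_continuousR, ex_derive_cot_part, no_pole_minmax; auto.
Qed.

Lemma RInt_f_decomp :
  RInt f u v = phi 0 * RInt csc2_part u v + phi1 * RInt cot_part u v + RInt remainder u v.
Proof.
  assert (Hd2 : forall x, u <= x <= v -> ex_derive csc2_part x)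
    by (intros; apply ex_derive_csc2_part; auto).
  assert (Hdt : forall x, u <= x <= v -> ex_derive cot_part x)
    by (intros; apply ex_derive_cot_part; auto).
  rewrite (RInt_ext f (fun x => (phi 0 * csc2_part x + phi1 * cot_part x) + remainder x)).
  - rewrite RInt_plusR, RInt_plusR, RInt_scalR, RInt_scalR; auto using ex_RInt_remainder;
      apply ex_RInt_ex_derive_le; auto; intros x Hx.
    + apply ex_derive_scal; auto.
    + apply ex_derive_scal; auto.
    + apply ex_derive_plusR; apply ex_derive_scal; auto.
  - intros x Hx. apply f_decomp, no_pole_minmax. lra.
Qed.

End NoPole.

Lemma finite_part_expr e : 0 < e < a ->
  RInt f (- a) (- e) + RInt f e a - 2 * phi 0 / e
  = 2 * phi 0 * (cot_part e - 1 / e) + (RInt remainder (- a) a - RInt remainder (- e) e).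
Proof.
  intros He.
  assert (Hp : forall x, e <= x <= a -> sin (c * x) <> 0)
    by (intros; apply sin_c_neq_0; rewrite Rabs_right; lra).
  assert (Hn : forall x, - a <= x <= - e -> sin (c * x) <> 0)
    by (intros; apply sin_c_neq_0; rewrite Rabs_left; lra).
  rewrite (RInt_f_decomp (- a) (- e) ltac:(lra) Hn), (RInt_f_decomp e a ltac:(lra) Hp).
  rewrite !RInt_csc2_part, !RInt_cot_part by (auto; lra).
  assert (Hsplit : RInt remainder (- a) a
      = RInt remainder (- a) (- e) + RInt remainder (- e) e + RInt remainder e a).
  { rewrite <- (RInt_Chasles (V := R_CompleteNormedModule) remainder (- a) (- e) a),
      <- (RInt_Chasles (V := R_CompleteNormedModule) remainder (- e) e a)
      by apply ex_RInt_remainder.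
    unfold plus; simpl. as_real_eq. ring. }
  rewrite Hsplit, !cot_part_opp.
  replace (c * - e) with (- (c * e)) by ring. replace (c * - a) with (- (c * a)) by ring.
  rewrite !sin_neg, !Rabs_Ropp.
  generalize (RInt remainder (- a) (- e)) (RInt remainder (- e) e) (RInt remainder e a).
  intros. rewrite cot_part_a. unfold Rdiv. ring.
Qed.

(* [c cot (c e) - 1/e], written so that it is visibly smooth at [0], where it vanishes. *)
Definition cot_defect e := c * (c * e) * (cos_tail (c * e) - sinc_tail (c * e)) * / sinc (c * e).

Lemma cot_defect_eq e : 0 < e < a -> cot_part e - 1 / e = cot_defect e.
Proof.
  intros He. pose proof (sin_c_pos e ltac:(lra)) as Hs. pose proof c_pos.
  unfold cot_part, cot_defect. rewrite sin_sinc in *. rewrite cos_cos_tail.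
  rewrite (sinc_sinc_tail (c * e)) in *.
  assert (0 < c * e) by nra.
  assert (0 < 1 + c * e * (c * e) * sinc_tail (c * e))
    by (apply (Rmult_lt_reg_l (c * e)); auto; lra).
  field. repeat split; lra.
Qed.

Lemma ex_derive_cot_defect_0 : ex_derive cot_defect 0.
Proof.
  assert (Hs : forall g : R -> R,
             smooth_upto 0 (fun _ => True) g -> ex_derive (fun x => g (c * x)) 0).
  { intros g Hg. apply ex_derive_comp; [|auto_derive; auto].
    apply (smooth_upto_ex_derive 0 _ g _ Hg I). }
  unfold cot_defect. apply ex_derive_mult; [apply ex_derive_mult|].
  - auto_derive; auto.
  - apply ex_derive_minusR; apply Hs; [apply smooth_upto_cos_tail|apply smooth_upto_sinc_tail].
  - apply ex_derive_inv; [apply Hs, smooth_upto_sinc|]. rewrite Rmult_0_r, sinc_0. lra.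
Qed.

Lemma is_hadamard_fp_remainder : is_hadamard_fp f a (phi 0) (RInt remainder (- a) a).
Proof.
  set (G y := RInt remainder 0 y).
  set (H y := 2 * phi 0 * cot_defect y + (RInt remainder (- a) a - (G y - G (- y)))).
  assert (HG : forall y, ex_derive G y)
    by (intro y; eexists; apply is_derive_RInt_from_0, remainder_continuous).
  assert (H0 : H 0 = RInt remainder (- a) a).
  { unfold H, cot_defect. rewrite Ropp_0. ring. }
  unfold is_hadamard_fp. rewrite <- H0.
  apply (filterlim_ext_loc H).
  - exists (mkposreal a a_pos). intros y Hy Hy0. change (Rabs (y - 0) < a) in Hy.
    apply Rabs_def2 in Hy.
    rewrite finite_part_expr, cot_defect_eq by lra.
    rewrite <- (RInt_Chasles (V := R_CompleteNormedModule) remainder (- y) 0 y),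
      <- (opp_RInt_swap (V := R_CompleteNormedModule) remainder 0 (- y))
      by apply ex_RInt_remainder.
    unfold H, G, plus, opp; simpl. as_real_eq. ring.
  - apply (filterlim_filter_le_1 (F := locally 0)); [apply filter_le_within|].
    apply ex_derive_continuousR. unfold H.
    apply ex_derive_plusR; [apply ex_derive_scal, ex_derive_cot_defect_0|].
    apply ex_derive_minusR; [apply ex_derive_const|].
    apply ex_derive_minusR; [apply HG|].
    apply (ex_derive_comp G Ropp); [apply HG|auto_derive; auto].
Qed.

Lemma trap_sum_corrected_error k : exists C, forall n, (0 < n)%nat ->
  let h := a / INR n in
  Rabs (RInt remainder (- a) a
        - (trap_sum f a n - PI ^ 2 / (3 * h) * phi 0 + Derive_n phi 2 0 * h / 2))
    <= C * h ^ S k.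
Proof.
  destruct (trapezoid_periodic_error remainder (2 * a) (- a) k) as [C HC];
    [lra|apply remainder_add_2a|intros; apply remainder_smooth|].
  exists C. intros n Hn. cbv zeta.
  rewrite (trap_sum_correction n Hn), <- Rabs_Ropp, Ropp_minus_distr.
  pose proof (INR_n_pos n Hn).
  specialize (HC (2 * n)%nat ltac:(lia)).
  replace (2 * a / INR (2 * n)) with (a / INR n) in HC by (rewrite mult_INR; simpl; field; lra).
  replace (- a + 2 * a) with a in HC by ring.
  exact HC.
Qed.

End SingularPart.

Lemma pow_le_Rpower h k mu : 0 < h <= 1 -> mu <= INR k -> h ^ k <= Rpower h mu.
Proof.
  intros Hh Hk. rewrite <- Rpower_pow by lra.
  replace (INR k) with (mu + (INR k - mu)) by ring. rewrite Rpower_plus.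
  assert (H1 : Rpower h (INR k - mu) <= 1).
  { replace 1 with (Rpower 1 (INR k - mu))
      by (unfold Rpower; rewrite ln_1, Rmult_0_r, exp_0; reflexivity).
    apply Rle_Rpower_l; lra. }
  assert (H2 : 0 < Rpower h mu) by apply exp_pos.
  nra.
Qed.

Lemma mesh_in_unit a N n : 0 < a -> INR N > a -> (N <= n)%nat -> (0 < n)%nat ->
  0 < a / INR n <= 1.
Proof.
  intros Ha HN HNn Hn.
  assert (INR N <= INR n) by (apply le_INR; auto).
  split; [apply Rdiv_lt_0_compat; lra|].
  apply Rmult_le_reg_r with (INR n); [lra|]. unfold Rdiv. rewrite Rmult_assoc, Rinv_l; lra.
Qed.

Theorem mainTheorem1 (a : R) (f phi : R -> R) (delta : R) :
  0 < a ->
  (forall x, f (x + 2 * a) = f x) ->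
  smooth_off_2aZ f a ->
  0 < delta ->
  analytic_on phi delta ->
  (forall x, 0 < Rabs x < delta -> f x = phi x / x ^ 2) ->
  exists I : R,
    is_hadamard_fp f a (phi 0) I /\
    forall mu : R, 0 < mu ->
      exists C : R, exists N : nat, forall n : nat, (N <= n)%nat -> (0 < n)%nat ->
        let h := a / INR n in
        Rabs (I - (trap_sum f a n - PI ^ 2 / (3 * h) * phi 0
                   + Derive_n phi 2 0 * h / 2))
          <= C * Rpower h mu.
Proof.
  intros Ha Hper Hsm Hd Han Hf.
  destruct (Han 0) as [r0 [Hr0 [cc Hcc]]]; [rewrite Rabs_R0; auto|].
  exists (RInt (remainder a f phi cc) (- a) a).
  split; [apply (is_hadamard_fp_remainder a f phi delta r0 cc); auto|].
  intros mu Hmu.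
  destruct (INR_unbounded mu) as [k Hk].
  destruct (trap_sum_corrected_error a f phi delta r0 cc Ha Hper Hsm Hd Hr0 Hcc Hf k) as [C HC].
  destruct (INR_unbounded a) as [N HN].
  exists (Rabs C), N. intros n HnN Hn h.
  assert (Hh : 0 < h <= 1) by (apply mesh_in_unit with N; auto).
  eapply Rle_trans; [exact (HC n Hn)|].
  apply Rle_trans with (Rabs C * h ^ S k).
  - apply Rmult_le_compat_r; [apply pow_le; lra|apply Rle_abs].
  - apply Rmult_le_compat_l; [apply Rabs_pos|apply pow_le_Rpower; auto].
    rewrite S_INR. lra.
Qed.
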